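(* In an Ehresmann semigroup $S$, we have ${\le_l}\circ{\le_r}={\le_r}\circ{\le_l}$ (as composites of binary relations on $S$).
   Context: A DRC-semigroup is $(S,\cdot,D,R)$, $(S,\cdot)$ a semigroup, $D,R:S\to S$ with, for all $a,b$: $D(a)a=a$, $aR(a)=a$; $D(ab)=D(aD(b))$, $R(ab)=R(R(a)b)$; $D(ab)=D(a)D(ab)D(a)$, $R(ab)=R(b)R(ab)R(b)$; $R(D(a))=D(a)$, $D(R(a))=R(a)$. An Ehresmann semigroup is a DRC-semigroup additionally satisfying $D(a)D(b)=D(b)D(a)$ and $R(a)R(b)=R(b)R(a)$ for all $a,b$. Projections $\mathbf P(S)=\{D(a):a\in S\}$ are ordered by $p\le q\iff p=pq=qp$. On $S$ define $a\le_l b\iff a=pb$ for some $p\in\mathbf P(S)$ with $p\le D(b)$, and $a\le_r b\iff a=bq$ for some $q\in\mathbf P(S)$ with $q\le R(b)$. *)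

Record DRC_semigroup (S : Type) (mul : S -> S -> S) (D R : S -> S) : Prop := {
  drc_assoc : forall a b c, mul a (mul b c) = mul (mul a b) c;
  drc_D_left : forall a, mul (D a) a = a;
  drc_R_right : forall a, mul a (R a) = a;
  drc_D_cong : forall a b, D (mul a b) = D (mul a (D b));
  drc_R_cong : forall a b, R (mul a b) = R (mul (R a) b);
  drc_D_sand : forall a b, D (mul a b) = mul (mul (D a) (D (mul a b))) (D a);
  drc_R_sand : forall a b, R (mul a b) = mul (mul (R b) (R (mul a b))) (R b);
  drc_RD : forall a, R (D a) = D a;
  drc_DR : forall a, D (R a) = R a
}.

Record Ehresmann_semigroup (S : Type) (mul : S -> S -> S) (D R : S -> S) : Prop := {
  eh_drc : DRC_semigroup S mul D R;
  eh_D_comm : forall a b, mul (D a) (D b) = mul (D b) (D a);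
  eh_R_comm : forall a b, mul (R a) (R b) = mul (R b) (R a)
}.

(* Projections P(S) = { D a : a in S }. *)
Definition is_projection {S : Type} (D : S -> S) (p : S) : Prop :=
  exists a, p = D a.

Definition proj_le {S : Type} (mul : S -> S -> S) (p q : S) : Prop :=
  p = mul p q /\ p = mul q p.

Definition le_l {S : Type} (mul : S -> S -> S) (D : S -> S) (a b : S) : Prop :=
  exists p, is_projection D p /\ proj_le mul p (D b) /\ a = mul p b.

Definition le_r {S : Type} (mul : S -> S -> S) (D R : S -> S) (a b : S) : Prop :=
  exists q, is_projection D q /\ proj_le mul q (R b) /\ a = mul b q.

Definition rel_comp {S : Type} (r1 r2 : S -> S -> Prop) (a c : S) : Prop :=
  exists b, r1 a b /\ r2 b c.

From Stdlib Require Import Setoid.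

(* In an Ehresmann semigroup the projections form a semilattice (a commutative
   band), so the bound [p <= D b] in [a <=_l b] is superfluous: [a <=_l b]
   holds as soon as [a = p b] for some projection [p], since then also
   [a = (p D b) b] with [p D b <= D b]; dually for [<=_r].  Both composites
   therefore say that [a = p c q] for projections [p] and [q], and associativity
   supplies the middle element, [p c] or [c q]. *)

Local Arguments drc_assoc {S mul D R}.
Local Arguments drc_D_left {S mul D R}.
Local Arguments drc_R_right {S mul D R}.
Local Arguments drc_D_sand {S mul D R}.
Local Arguments drc_RD {S mul D R}.
Local Arguments drc_DR {S mul D R}.
Local Arguments eh_drc {S mul D R}.
Local Arguments eh_D_comm {S mul D R}.

Section Projections.

Variables (S : Type) (mul : S -> S -> S) (D R : S -> S).
Local Infix "*" := mul.

Section DRC.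

Hypothesis H : DRC_semigroup S mul D R.

Lemma D_idem (a : S) : D (D a) = D a.
Proof. now rewrite <- (drc_RD H a) at 1; rewrite (drc_DR H), (drc_RD H). Qed.

Lemma projection_idem (p : S) : is_projection D p -> p * p = p.
Proof.
  intros [a ->]. rewrite <- (D_idem a) at 1. apply (drc_D_left H).
Qed.

Lemma is_projection_R (a : S) : is_projection D (R a).
Proof. exists (R a). symmetry. apply (drc_DR H). Qed.

End DRC.

Section Ehresmann.

Hypothesis HS : Ehresmann_semigroup S mul D R.
Let H : DRC_semigroup S mul D R := eh_drc HS.

Lemma projection_comm (p q : S) :
  is_projection D p -> is_projection D q -> p * q = q * p.
Proof. intros [a ->] [b ->]. apply (eh_D_comm HS). Qed.

Lemma proj_le_D_mul (x y : S) : proj_le mul (D (x * y)) (D x).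
Proof.
  assert (Hl : D (x * y) = D x * D (x * y)).
  { rewrite (drc_D_sand H x y) at 1.
    rewrite <- (drc_assoc H), (eh_D_comm HS (x * y) x), (drc_assoc H).
    now rewrite (projection_idem H (D x)) by now exists x. }
  split; [rewrite (eh_D_comm HS) |]; exact Hl.
Qed.

Lemma D_mul_D (x y : S) : D (D x * D y) = D x * D y.
Proof.
  (* With [e = D x], [f = D y]: [D (e f)] lies below [e] and, since
     [e f = f e], below [f]; hence [e f = D (e f) e f = D (e f)]. *)
  assert (Hx : D (D x * D y) = D (D x * D y) * D x).
  { rewrite <- (D_idem H x) at 3. apply (proj_le_D_mul (D x) (D y)). }
  assert (Hy : D (D x * D y) = D (D x * D y) * D y).
  { rewrite (eh_D_comm HS x y). rewrite <- (D_idem H y) at 3.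
    apply (proj_le_D_mul (D y) (D x)). }
  rewrite <- (drc_D_left H (D x * D y)) at 2.
  now rewrite (drc_assoc H), <- Hx, <- Hy.
Qed.

Lemma is_projection_mul (p q : S) :
  is_projection D p -> is_projection D q -> is_projection D (p * q).
Proof. intros [a ->] [b ->]. exists (D a * D b). symmetry. apply D_mul_D. Qed.

Lemma proj_le_mulr (p q : S) :
  is_projection D p -> is_projection D q -> proj_le mul (p * q) q.
Proof.
  intros Hp Hq.
  assert (Hpq : p * q * q = p * q).
  { now rewrite <- (drc_assoc H), (projection_idem H q Hq). }
  split; [now rewrite Hpq |].
  now rewrite (drc_assoc H), (projection_comm q p Hq Hp), Hpq.
Qed.

Lemma proj_le_mull (p q : S) :
  is_projection D p -> is_projection D q -> proj_le mul (p * q) p.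
Proof.
  intros Hp Hq. rewrite (projection_comm p q Hp Hq). now apply proj_le_mulr.
Qed.

Lemma le_l_iff (a b : S) :
  le_l mul D a b <-> exists p, is_projection D p /\ a = p * b.
Proof.
  split.
  - intros (p & Hp & _ & ->). now exists p.
  - intros (p & Hp & ->). exists (p * D b). split; [| split].
    + apply is_projection_mul; [exact Hp | now exists b].
    + apply proj_le_mulr; [exact Hp | now exists b].
    + now rewrite <- (drc_assoc H), (drc_D_left H).
Qed.

Lemma le_r_iff (a b : S) :
  le_r mul D R a b <-> exists q, is_projection D q /\ a = b * q.
Proof.
  split.
  - intros (q & Hq & _ & ->). now exists q.
  - intros (q & Hq & ->). exists (R b * q). split; [| split].
    + apply is_projection_mul; [apply (is_projection_R H) | exact Hq].
    + apply proj_le_mull; [apply (is_projection_R H) | exact Hq].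
    + now rewrite (drc_assoc H), (drc_R_right H).
Qed.

Lemma le_l_le_r_sub (a c : S) :
  rel_comp (le_l mul D) (le_r mul D R) a c ->
  rel_comp (le_r mul D R) (le_l mul D) a c.
Proof.
  intros (b & Hab & Hbc).
  apply le_l_iff in Hab as (p & Hp & ->).
  apply le_r_iff in Hbc as (q & Hq & ->).
  exists (p * c). split.
  - apply le_r_iff. exists q. split; [exact Hq | apply (drc_assoc H)].
  - apply le_l_iff. now exists p.
Qed.

Lemma le_r_le_l_sub (a c : S) :
  rel_comp (le_r mul D R) (le_l mul D) a c ->
  rel_comp (le_l mul D) (le_r mul D R) a c.
Proof.
  intros (b & Hab & Hbc).
  apply le_r_iff in Hab as (q & Hq & ->).
  apply le_l_iff in Hbc as (p & Hp & ->).
  exists (c * q). split.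
  - apply le_l_iff. exists p. split; [exact Hp | symmetry; apply (drc_assoc H)].
  - apply le_r_iff. now exists q.
Qed.

End Ehresmann.

End Projections.

Theorem proposition10p3 (S : Type) (mul : S -> S -> S) (D R : S -> S)
  (HS : Ehresmann_semigroup S mul D R) :
  forall a c : S,
    rel_comp (le_l mul D) (le_r mul D R) a c <->
    rel_comp (le_r mul D R) (le_l mul D) a c.
Proof.
  intros a c. split; [apply le_l_le_r_sub | apply le_r_le_l_sub]; exact HS.
Qed.
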